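(* Let $\mathfrak{X}$ be a Bourgain–Delbaen space determined by $(\Gamma_q,i_q)_q$ and let $\Gamma'$ be a self-determined subset of $\Gamma$. Write $\{q:\Gamma'\cap\Delta_q\neq\varnothing\}=\{q_0<q_1<q_2<\cdots\}$, $\Gamma'_{q}=\Gamma'\cap\Gamma_q$, let $R$ denote restriction onto $\Gamma'$, and for each $s$ define $i'_{q_s}:\ell_\infty(\Gamma'_{q_s})\to\ell_\infty(\Gamma')$ by $i'_{q_s}(x)=R(i_{q_s}(x))$, where $x$ is identified with a vector in $\ell_\infty(\Gamma_{q_s})$ vanishing off $\Gamma'_{q_s}$. Then $(i'_{q_s})_s$ is a compatible sequence of extension operators with $\sup_s\|i'_{q_s}\|\leqslant\sup_q\|i_q\|$; hence $(\Gamma'_{q_s},i'_{q_s})_s$ defines a Bourgain–Delbaen space $\mathfrak{X}_{(\Gamma'_{q_s},i'_{q_s})_s}$.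
   Context: Bourgain–Delbaen spaces: given a strictly increasing sequence $(\Gamma_q)_q$ of non-empty finite sets with union $\Gamma$ and linear extension operators $i_q:\ell_\infty(\Gamma_q)\to\ell_\infty(\Gamma)$ ($i_q(x)|_{\Gamma_q}=x$) with $\sup_q\|i_q\|<\infty$ that are compatible (for $p<q$, $i_p=i_q\circ r_q\circ i_p$, with $r_q$ restriction onto $\Gamma_q$), set $\Delta_1=\Gamma_1$, $\Delta_{q+1}=\Gamma_{q+1}\setminus\Gamma_q$, $d_\gamma=i_q(e_\gamma)$ for $\gamma\in\Delta_q$; the Bourgain–Delbaen space $\mathfrak{X}_{(\Gamma_q,i_q)_q}$ is the closed span of $\{d_\gamma\}$ in $\ell_\infty(\Gamma)$. $e_\gamma^*$ denotes evaluation at $\gamma$ restricted to the space, $(d_\gamma^* )$ the functionals biorthogonal to $(d_\gamma)$. An infinite subset $\Gamma'\subseteq\Gamma$ is self-determined if each $d_\gamma^*$, $\gamma\in\Gamma'$, lies in the linear span of $\{e_\eta^*:\eta\in\Gamma'\}$. *)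

From HB Require Import structures.
From mathcomp Require Import all_boot all_order all_algebra.
From mathcomp Require Import boolp classical_sets cardinality reals.
Set Implicit Arguments. Unset Strict Implicit. Unset Printing Implicit Defensive.
Import Order.TTheory GRing.Theory Num.Theory.
Local Open Scope classical_set_scope.
Local Open Scope ring_scope.

(* Vectors of l_oo(A), for A a subset of the ambient index type T, are modelled
   as functions T -> R vanishing off A (and bounded). *)

Section BD.
Variables (R : realType) (T : Type).

Definition supported (A : set T) (x : T -> R) : Prop := forall t, ~ A t -> x t = 0.

Definition bounded_vec (x : T -> R) : Prop := exists M : R, forall t, `|x t| <= M.

Definition restr (A : set T) (y : T -> R) : T -> R :=
  fun t => if `[< A t >] then y t else 0.

Definition unitvec (g : T) : T -> R := fun t => if `[< t = g >] then 1 else 0.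

Definition is_ext_op (Gq G : set T) (j : (T -> R) -> (T -> R)) : Prop :=
  [/\ (forall (a : R) x y, supported Gq x -> supported Gq y ->
         j (fun t => a * x t + y t) = (fun t => a * j x t + j y t)),
      (forall x, supported Gq x -> supported G (j x) /\ bounded_vec (j x)) &
      (forall x, supported Gq x -> forall t, Gq t -> j x t = x t)].

Definition op_norm_le (Gq : set T) (j : (T -> R) -> (T -> R)) (C : R) : Prop :=
  forall x, supported Gq x -> forall M : R, (forall t, `|x t| <= M) ->
    forall t, `|j x t| <= C * M.

Definition compatible (Gam : nat -> set T) (i : nat -> (T -> R) -> (T -> R)) : Prop :=
  forall p q : nat, (p < q)%N -> forall x, supported (Gam p) x ->
    i p x = i q (restr (Gam q) (i p x)).

Definition BD_data (G : set T) (Gam : nat -> set T) (i : nat -> (T -> R) -> (T -> R)) : Prop :=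
  (forall q, finite_set (Gam q) /\ Gam q !=set0) /\
  (forall q, Gam q `<` Gam q.+1) /\
  \bigcup_q Gam q = G /\
  (forall q, is_ext_op (Gam q) G (i q)) /\
  (exists C : R, forall q, op_norm_le (Gam q) (i q) C) /\
  compatible Gam i.

Definition Delta (Gam : nat -> set T) (q : nat) : set T :=
  match q with 0 => Gam 0%N | q'.+1 => Gam q'.+1 `\` Gam q' end.

End BD.

Section BDspace.
Variables (R : realType) (T : Type).
Variables (Gam : nat -> set T) (i : nat -> (T -> R) -> (T -> R)).

Definition qidx (g : T) : nat := xget 0%N [set q | Delta Gam q g].

Definition dvec (g : T) : T -> R := i (qidx g) (unitvec R g).

Definition span_comb (s : seq T) (c : T -> R) : T -> R :=
  fun t => \sum_(k <- s) c k * dvec k t.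

Definition BDspace (x : T -> R) : Prop :=
  bounded_vec x /\
  forall e : R, 0 < e -> exists (s : seq T) (c : T -> R),
    forall t, `|x t - span_comb s c t| <= e.

Definition is_dstar (g : T) (f : (T -> R) -> R) : Prop :=
  [/\ (forall (a : R) x y, BDspace x -> BDspace y ->
         f (fun t => a * x t + y t) = a * f x + f y),
      (exists C : R, forall x, BDspace x -> forall M : R, (forall t, `|x t| <= M) ->
         `|f x| <= C * M) &
      (forall h, f (dvec h) = unitvec R g h)].

Definition self_determined (G' : set T) : Prop :=
  infinite_set G' /\
  forall g, G' g -> forall f, is_dstar g f ->
    exists (s : seq T) (c : T -> R), (forall k, ~ G' k -> c k = 0) /\
      forall x, BDspace x -> f x = \sum_(k <- s) c k * x k.

End BDspace.

From HB Require Import structures.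
From mathcomp Require Import all_boot all_order all_algebra.
From mathcomp Require Import boolp classical_sets cardinality reals.
From mathcomp Require Import ring lra.
Set Implicit Arguments. Unset Strict Implicit. Unset Printing Implicit Defensive.
Import Order.TTheory GRing.Theory Num.Theory.
Local Open Scope classical_set_scope.
Local Open Scope ring_scope.

(* Since d*_g = e*_g - e*_g o i_p o r_p for g in Delta_(p+1), self-determination of
   G' makes e*_g o i_p o r_p a combination of evaluations at points of G'.  Hence if z is
   supported on Gamma_p and vanishes on G', then i_p z vanishes at g; by induction along
   the Delta_q, i_q z vanishes on all of G' for every such z and every q.  So discarding
   the coordinates off G' before extending does not change the extension on G', which is
   the compatibility of the restricted operators; the remaining properties are inherited
   directly.  Evaluating d*_g at i_L z needs i_L z in the linear span of the d_h, which
   holds by induction on L. *)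

Section Restriction.
Variables (R : realType) (T : Type).
Implicit Types (A B : set T) (x y : T -> R).

Lemma restr_in A y t : A t -> restr A y t = y t.
Proof. by move=> At; rewrite /restr asboolT. Qed.

Lemma restr_out A y t : ~ A t -> restr A y t = 0.
Proof. by move=> At; rewrite /restr asboolF. Qed.

Lemma restr_supported A y : supported A (restr A y).
Proof. by move=> t /restr_out ->. Qed.

Lemma supported_sub A B x : A `<=` B -> supported A x -> supported B x.
Proof. by move=> AB sx t Bt; apply: sx => /AB. Qed.

Lemma supported_restr A B y : supported B y -> supported B (restr A y).
Proof.
move=> sy t Bt; case: (pselect (A t)) => At; last by rewrite restr_out.
by rewrite restr_in // sy.
Qed.

Lemma restr_id A y : supported A y -> restr A y = y.
Proof.
move=> sy; apply: funext => t.
by case: (pselect (A t)) => At; [rewrite restr_in | rewrite restr_out // sy].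
Qed.

Lemma restrI A B y : restr (A `&` B) y = restr A (restr B y).
Proof.
apply: funext => t; case: (pselect (A t)) => At; last by rewrite !restr_out // => -[].
case: (pselect (B t)) => Bt; first by rewrite !restr_in.
by rewrite [RHS]restr_in // !restr_out // => -[].
Qed.

Lemma restr_restr A B y : A `<=` B -> restr A (restr B y) = restr A y.
Proof. by move=> AB; rewrite -restrI setIidl. Qed.

Lemma restr_split A y : y = (fun t => restr A y t + restr (~` A) y t).
Proof.
apply: funext => t; case: (pselect (A t)) => At.
  by rewrite restr_in // restr_out ?addr0.
by rewrite restr_out // restr_in // add0r.
Qed.

Lemma restr_linear A (a : R) x y :
  restr A (fun t => a * x t + y t) = (fun t => a * restr A x t + restr A y t).
Proof.
apply: funext => t; case: (pselect (A t)) => At; first by rewrite !restr_in.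
by rewrite !restr_out // mulr0 addr0.
Qed.

Lemma normr_restr A y t : `|restr A y t| <= `|y t|.
Proof.
case: (pselect (A t)) => At; first by rewrite restr_in.
by rewrite restr_out // normr0.
Qed.

End Restriction.

Section UnitVectors.
Variables (R : realType) (T : Type).
Implicit Types (A : set T) (g h : T).

Lemma unitvec_eq g : unitvec R g g = 1.
Proof. by rewrite /unitvec asboolT. Qed.

Lemma unitvec_neq g h : h <> g -> unitvec R g h = 0.
Proof. by move=> hg; rewrite /unitvec asboolF. Qed.

Lemma unitvecC g h : unitvec R g h = unitvec R h g.
Proof.
case: (pselect (h = g)) => [->//|hg].
by rewrite !unitvec_neq // => gh; apply: hg.
Qed.

Lemma unitvec_supported A g : A g -> supported A (unitvec R g).
Proof. by move=> Ag t At; apply: unitvec_neq => tg; apply: At; rewrite tg. Qed.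

Lemma finite_unitvec_decomp A : finite_set A -> exists s : seq {classic T},
  forall u : T -> R, supported A u ->
    u = (fun t => \sum_(g <- s) u g * restr A (unitvec R g) t).
Proof.
move=> /(@finite_seqP {classic T}) [s0 E]; exists (undup s0) => u su.
have sE t : A t <-> (t : {classic T}) \in undup s0 by rewrite mem_undup E.
apply: funext => t; case: (pselect (A t)) => At; last first.
  by rewrite su // big1 // => g _; rewrite restr_out // mulr0.
rewrite (bigD1_seq (t : {classic T})) ?undup_uniq //=; last exact/sE.
rewrite restr_in // unitvec_eq mulr1 big1 ?addr0 // => g gt.
by rewrite restr_in // unitvec_neq ?mulr0 // => tg; move: gt; rewrite -tg eqxx.
Qed.

End UnitVectors.

Section ExtensionOperator.
Variables (R : realType) (T : Type) (A G : set T) (j : (T -> R) -> (T -> R)).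
Hypothesis jE : is_ext_op A G j.
Implicit Types (x y : T -> R).

Lemma ext_op_linear (a : R) x y : supported A x -> supported A y ->
  j (fun t => a * x t + y t) = (fun t => a * j x t + j y t).
Proof. by case: jE => L _ _; apply: L. Qed.

Lemma ext_opD x y : supported A x -> supported A y ->
  j (fun t => x t + y t) = (fun t => j x t + j y t).
Proof.
move=> sx sy; have := ext_op_linear 1 sx sy.
by under eq_fun do rewrite mul1r; under [in X in _ = X -> _]eq_fun do rewrite mul1r.
Qed.

Lemma ext_op0 : j (fun _ => 0) = (fun _ => 0).
Proof.
have s0 : supported A (fun _ : T => 0 : R) by [].
have E := ext_opD s0 s0; rewrite (_ : (fun _ => _ + _) = (fun _ => 0)) in E.
  by apply: funext => t; have /= := congr1 (fun f => f t) E; lra.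
by apply: funext => t; rewrite addr0.
Qed.

Lemma ext_op_sum (I : Type) (s : seq I) (c : I -> R) (v : I -> T -> R) :
  (forall k, supported A (v k)) ->
  j (fun t => \sum_(k <- s) c k * v k t) = (fun t => \sum_(k <- s) c k * j (v k) t).
Proof.
move=> sv; elim: s => [|k s IH].
  have -> : (fun t => \sum_(k <- [::]) c k * v k t) = (fun _ => 0).
    by apply: funext => t; rewrite big_nil.
  by rewrite ext_op0; apply: funext => t; rewrite big_nil.
have sS : supported A (fun t => \sum_(k <- s) c k * v k t).
  by move=> u Au; rewrite big1_idem //= => [|kk _]; [rewrite addr0 | rewrite sv // mulr0].
under eq_fun do rewrite big_cons.
by rewrite ext_op_linear // IH; apply: funext => t; rewrite big_cons.
Qed.

Lemma ext_opE x t : supported A x -> A t -> j x t = x t.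
Proof. by move=> sx At; case: jE => _ _ E; apply: E. Qed.

Lemma restr_ext_op x : supported A x -> restr A (j x) = x.
Proof.
move=> sx; apply: funext => t; case: (pselect (A t)) => At.
  by rewrite restr_in // ext_opE.
by rewrite restr_out // sx.
Qed.

Lemma is_ext_op_restr B : is_ext_op (B `&` A) (B `&` G) (fun x => restr B (j x)).
Proof.
have sA x : supported (B `&` A) x -> supported A x by apply: supported_sub => t [].
case: jE => _ jB _; split.
- by move=> a x y /sA sx /sA sy; rewrite ext_op_linear // restr_linear.
- move=> x /sA sx; have [sj [M jM]] := jB x sx; split.
    move=> t BGt; case: (pselect (B t)) => Bt; last by rewrite restr_out.
    by rewrite restr_in // sj // => Gt; apply: BGt.
  by exists M => t; apply: le_trans (normr_restr _ _ _) (jM t).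
- by move=> x sx t [Bt At]; rewrite restr_in // ext_opE //; apply: sA.
Qed.

Lemma op_norm_le_restr B C : op_norm_le A j C ->
  op_norm_le (B `&` A) (fun x => restr B (j x)) C.
Proof.
move=> jC x sx M xM t; apply: le_trans (normr_restr _ _ _) _.
by apply: jC xM t; apply: supported_sub sx => u [].
Qed.

End ExtensionOperator.

Section BourgainDelbaen.
Variables (R : realType) (T : Type).
Variables (Gam : nat -> set T) (i : nat -> (T -> R) -> (T -> R)).
Hypothesis Gam_finite : forall q, finite_set (Gam q).
Hypothesis Gam_incr : forall q, Gam q `<` Gam q.+1.
Hypothesis Gam_cover : \bigcup_q Gam q = [set: T].
Hypothesis i_ext : forall q, is_ext_op (Gam q) [set: T] (i q).
Hypothesis i_bounded : exists C : R, forall q, op_norm_le (Gam q) (i q) C.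
Hypothesis i_compat : compatible Gam i.
Implicit Types (x y z : T -> R) (g h t : T).

Lemma Gam_mono p q : (p <= q)%N -> Gam p `<=` Gam q.
Proof.
elim: q => [|q IH]; first by rewrite leqn0 => /eqP ->.
rewrite leq_eqVlt ltnS => /orP[/eqP -> //|/IH pq].
by move=> t /pq; apply: (properW (Gam_incr q)).
Qed.

Lemma DeltaP q g : Delta Gam q g <-> Gam q g /\ forall p, (p < q)%N -> ~ Gam p g.
Proof.
case: q => [|q] /=; first by split=> [h|[]//]; split.
split=> [[h1 h2]|[h1 h2]]; last by split=> //; apply: h2.
by split=> // p; rewrite ltnS => /Gam_mono pq /pq.
Qed.

Lemma Delta_sub q : Delta Gam q `<=` Gam q.
Proof. by move=> t /DeltaP[]. Qed.

Lemma Delta_succE q : Delta Gam q.+1 = Gam q.+1 `&` ~` Gam q.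
Proof. by []. Qed.

Lemma qidxP g : Delta Gam (qidx Gam g) g.
Proof.
apply: (@xgetPex _ 0%N [set q | Delta Gam q g]).
have [n _ gn] : (\bigcup_q Gam q) g by rewrite Gam_cover.
have ex : exists n, `[< Gam n g >] by exists n; apply/asboolP.
exists (ex_minn ex); case: ex_minnP => m /asboolP gm mmin.
apply/DeltaP; split=> // p pm gp.
by have := mmin p (asboolT gp); rewrite leqNgt pm.
Qed.

Lemma qidx_eq q g : Delta Gam q g -> qidx Gam g = q.
Proof.
move=> /DeltaP[hq nq]; have /DeltaP[hp np] := qidxP g.
by case: (ltngtP (qidx Gam g) q) => // [/nq|/np].
Qed.

Lemma Gam_qidx g : Gam (qidx Gam g) g.
Proof. exact: Delta_sub (qidxP g). Qed.

Lemma qidx_min p g : (p < qidx Gam g)%N -> ~ Gam p g.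
Proof. by case/DeltaP: (qidxP g) => _; apply. Qed.

Lemma qidx_le q g : Gam q g -> (qidx Gam g <= q)%N.
Proof. by move=> gq; rewrite leqNgt; apply/negP => /qidx_min. Qed.

Lemma i_compat_le p q x : (p <= q)%N -> supported (Gam p) x ->
  i q (restr (Gam q) (i p x)) = i p x.
Proof.
rewrite leq_eqVlt => /orP[/eqP <-|pq] sx; first by rewrite (restr_ext_op (i_ext p)).
by rewrite -i_compat.
Qed.

(* d*_g = e*_g - e*_g o i_p o r_p for g in Delta_(p+1): it kills d_h with qidx h <= p by
   compatibility, and d_h with qidx h > p because r_p d_h = 0. *)
Definition dstar g x : R :=
  x g - (if qidx Gam g is p.+1 then i p (restr (Gam p) x) g else 0).

Lemma dstar_dvec g h : dstar g (dvec Gam i h) = unitvec R g h.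
Proof.
rewrite /dstar /dvec; set m := qidx Gam h.
have se : supported (Gam m) (unitvec R h) by apply/unitvec_supported/Gam_qidx.
case E: (qidx Gam g) => [|p].
  rewrite subr0 (ext_opE (i_ext m)) 1?unitvecC //.
  by apply: (Gam_mono (leq0n m)); rewrite -E; apply: Gam_qidx.
case: (leqP m p) => mp.
  rewrite i_compat_le // subrr unitvec_neq // => gh.
  by move: mp; rewrite /m gh E ltnn.
have -> : restr (Gam p) (i m (unitvec R h)) = (fun _ => 0).
  apply: funext => t; case: (pselect (Gam p t)) => pt; last by rewrite restr_out.
  rewrite restr_in // (ext_opE (i_ext m)) //; last by apply: (Gam_mono (ltnW mp)).
  by apply: unitvec_neq => th; apply: (qidx_min mp); rewrite -th.
rewrite (ext_op0 (i_ext p)) subr0 (ext_opE (i_ext m)) 1?unitvecC //.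
by apply: (Gam_mono mp); rewrite -E; apply: Gam_qidx.
Qed.

Lemma dstar_is_dstar g : is_dstar Gam i g (dstar g).
Proof.
split; last exact: dstar_dvec.
  move=> a x y _ _; rewrite /dstar; case: (qidx Gam g) => [|p]; first by ring.
  by rewrite restr_linear (ext_op_linear (i_ext p)); [ring | apply: restr_supported..].
case: i_bounded => C iC; exists (1 + C) => x _ M xM.
have M0 : 0 <= M by apply: le_trans (xM g).
have restrM q t : `|restr (Gam q) x t| <= M by apply: le_trans (normr_restr _ _ _) _.
have iM q := iC q _ (@restr_supported _ _ (Gam q) x) M (restrM q) g.
have := iM 0%N; have := normr_ge0 (i 0 (restr (Gam 0) x) g).
rewrite /dstar mulrDl mul1r; case: (qidx Gam g) => [|p].
  by rewrite subr0; have := xM g; lra.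
by have := iM p; have := xM g; have := ler_normB (x g) (i p (restr (Gam p) x) g); lra.
Qed.

Definition dcomb x := exists l : seq (R * {classic T}),
  x = fun t => \sum_(p <- l) p.1 * dvec Gam i p.2 t.

Lemma dcombD x y : dcomb x -> dcomb y -> dcomb (fun t => x t + y t).
Proof.
move=> [l1 ->] [l2 ->]; exists (l1 ++ l2).
by apply: funext => t; rewrite big_cat.
Qed.

Lemma dcombZ (a : R) x : dcomb x -> dcomb (fun t => a * x t).
Proof.
move=> [l ->]; exists [seq (a * p.1, p.2) | p <- l].
apply: funext => t; rewrite big_map big_distrr /=.
by apply: eq_bigr => p _; rewrite mulrA.
Qed.

Lemma dcomb_span_comb x : dcomb x -> exists s c, x = span_comb Gam i s c.
Proof.
move=> [l ->]; pose s : seq {classic T} := undup (map snd l).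
exists s, (fun k => \sum_(p <- l | p.2 == (k : {classic T})) p.1).
apply: funext => t; rewrite /span_comb.
transitivity (\sum_(p <- l) \sum_(k <- s) (if p.2 == k then p.1 * dvec Gam i p.2 t else 0)).
  apply: eq_big_seq => p pl.
  have ps : p.2 \in s by rewrite mem_undup; apply: map_f.
  rewrite (bigD1_seq p.2) ?undup_uniq //= eqxx big1 ?addr0 // => k kp.
  by rewrite eq_sym (negbTE kp).
rewrite exchange_big; apply: eq_bigr => k _; rewrite big_distrl /= [RHS]big_mkcond /=.
by apply: eq_bigr => p _; case: eqP => [->|]; rewrite ?mul0r.
Qed.

Lemma BDspace_dcomb x : dcomb x -> bounded_vec x -> BDspace Gam i x.
Proof.
move=> /dcomb_span_comb [s [c ->]] bx; split=> // e e0; exists s, c => t.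
by rewrite subrr normr0 ltW.
Qed.

Lemma dcomb_ext_Delta q u : supported (Delta Gam q) u -> dcomb (i q u).
Proof.
move=> su; have su' : supported (Gam q) u := supported_sub (@Delta_sub q) su.
have [s E] := finite_unitvec_decomp R (Gam_finite q).
rewrite (E u su') (ext_op_sum (i_ext q)); last by move=> g; apply: restr_supported.
exists [seq (u g, g) | g <- s]; apply: funext => t; rewrite big_map.
apply: eq_bigr => g _ /=.
case: (pselect (Delta Gam q g)) => dg; last by rewrite su // !mul0r.
by rewrite /dvec (qidx_eq dg) restr_id //; apply/unitvec_supported/Delta_sub.
Qed.

Lemma Delta_succ_restr q y : supported (Gam q.+1) y ->
  supported (Delta Gam q.+1) (restr (~` Gam q) y).
Proof. by move=> sy; rewrite -(restr_id sy) -restrI setIC Delta_succE; apply: restr_supported. Qed.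

Lemma dcomb_ext_succ q w : supported (Gam q) w -> dcomb (i q w) -> dcomb (i q.+1 w).
Proof.
move=> sw iw; set y := restr (Gam q.+1) (i q w).
have sy : supported (Gam q.+1) y by apply: restr_supported.
have sw1 : supported (Gam q.+1) w := supported_sub (Gam_mono (leqnSn q)) sw.
have sv : supported (Gam q.+1) (restr (~` Gam q) y).
  exact: supported_sub (@Delta_sub q.+1) (Delta_succ_restr sy).
have wE : restr (Gam q) y = w.
  by rewrite restr_restr ?(restr_ext_op (i_ext q)) //; apply: Gam_mono.
have iE : i q w = fun t => i q.+1 w t + i q.+1 (restr (~` Gam q) y) t.
  rewrite (i_compat (ltnSn q) sw) -/y {1}(restr_split (Gam q) y) wE.
  exact: (ext_opD (i_ext q.+1) sw1 sv).
have -> : i q.+1 w = fun t => i q w t + (-1) * i q.+1 (restr (~` Gam q) y) t.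
  by apply: funext => t; rewrite iE; ring.
exact/dcombD/dcombZ/dcomb_ext_Delta/Delta_succ_restr.
Qed.

Lemma dcomb_ext q z : supported (Gam q) z -> dcomb (i q z).
Proof.
elim: q z => [|q IH] z sz; first exact: dcomb_ext_Delta.
have sz0 : supported (Gam q) (restr (Gam q) z) by apply: restr_supported.
rewrite (restr_split (Gam q) z) (ext_opD (i_ext q.+1)).
- by apply: dcombD; [apply: dcomb_ext_succ; [|apply: IH] | apply/dcomb_ext_Delta/Delta_succ_restr].
- exact: supported_sub (Gam_mono (leqnSn q)) sz0.
- exact: supported_sub (@Delta_sub q.+1) (Delta_succ_restr sz).
Qed.

Lemma BDspace_ext q z : supported (Gam q) z -> BDspace Gam i (i q z).
Proof.
move=> sz; apply: BDspace_dcomb; first exact: dcomb_ext.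
by case: (i_ext q) => _ /(_ z sz) [].
Qed.

Lemma Gam_contains_seq (s : seq {classic T}) p :
  exists2 L, (p <= L)%N & forall k, k \in s -> Gam L k.
Proof.
exists (maxn p (\max_(k <- s) qidx Gam k)); first exact: leq_maxl.
move=> k ks; apply: (Gam_mono _ (Gam_qidx k)).
exact: leq_trans (leq_bigmax_seq _ ks isT) (leq_maxr _ _).
Qed.

Variable G' : set T.
Hypothesis G'_self_determined : self_determined Gam i G'.

(* At i_L z (L large) the expansion of d*_g over the e*_k, k in G', gives 0, while the
   formula for d*_g gives - i_p z g. *)
Lemma ext_vanish_Delta p z g : supported (Gam p) z -> (forall k, G' k -> z k = 0) ->
  G' g -> qidx Gam g = p.+1 -> i p z g = 0.
Proof.
move=> sz z0 G'g gp; have [_ sd] := G'_self_determined.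
have [s [c [c0 dE]]] := sd g G'g _ (dstar_is_dstar g).
have [L pL sL] := Gam_contains_seq s p.+1.
have pL' : (p <= L)%N by apply: ltnW.
have szL : supported (Gam L) z := supported_sub (Gam_mono pL') sz.
have zE : restr (Gam p) (i L z) = z.
  by rewrite -(restr_restr _ (Gam_mono pL')) (restr_ext_op (i_ext L)) // restr_id.
have := dE _ (BDspace_ext szL).
rewrite (big1_seq (I := {classic T})) => [|k /andP[_ ks]]; last first.
  rewrite (ext_opE (i_ext L) szL (sL k ks)).
  by case: (pselect (G' k)) => G'k; [rewrite z0 // mulr0 | rewrite c0 // mul0r].
rewrite /dstar gp zE (ext_opE (i_ext L) szL); last first.
  by apply: (Gam_mono pL); rewrite -gp; apply: Gam_qidx.
by rewrite z0 // sub0r => /eqP; rewrite oppr_eq0 => /eqP.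
Qed.

Lemma ext_vanish q z : supported (Gam q) z -> (forall k, G' k -> z k = 0) ->
  forall g, G' g -> i q z g = 0.
Proof.
move=> sz z0 g; have [n gn] := ubnP (qidx Gam g).
elim: n => // n IH in g q z sz z0 gn *; rewrite ltnS in gn => G'g.
case: (leqP (qidx Gam g) q) => gq.
  by rewrite (ext_opE (i_ext q)) ?z0 //; apply: (Gam_mono gq); apply: Gam_qidx.
case E: (qidx Gam g) gq gn => [//|p]; rewrite ltnS => qp pn.
rewrite -(i_compat_le qp sz); apply: ext_vanish_Delta E => //; first exact: restr_supported.
move=> k G'k; case: (pselect (Gam p k)) => pk; last by rewrite restr_out.
by rewrite restr_in //; apply: IH => //; apply: leq_ltn_trans (qidx_le pk) pn.
Qed.

End BourgainDelbaen.

Section RestrictedData.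
Variables (R : realType) (T : Type).
Variables (Gam : nat -> set T) (i : nat -> (T -> R) -> (T -> R)).
Variables (G' : set T) (qs : nat -> nat).
Hypothesis Gam_finite : forall q, finite_set (Gam q).
Hypothesis Gam_incr : forall q, Gam q `<` Gam q.+1.
Hypothesis Gam_cover : \bigcup_q Gam q = [set: T].
Hypothesis i_ext : forall q, is_ext_op (Gam q) [set: T] (i q).
Hypothesis i_bounded : exists C : R, forall q, op_norm_le (Gam q) (i q) C.
Hypothesis i_compat : compatible Gam i.
Hypothesis G'_self_determined : self_determined Gam i G'.
Hypothesis qs_incr : forall s, (qs s < qs s.+1)%N.
Hypothesis qs_range : forall q, (exists s, qs s = q) <-> (G' `&` Delta Gam q !=set0).

Let Gam' s := G' `&` Gam (qs s).
Let i' s (x : T -> R) := restr G' (i (qs s) x).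

Lemma qs_mono : {homo qs : m n / (m < n)%N}.
Proof. exact: homo_ltn ltn_trans qs_incr. Qed.

Lemma restricted_Delta s : exists2 g, G' g & Delta Gam (qs s) g.
Proof. by have [g []] := (qs_range (qs s)).1 (ex_intro _ s erefl); exists g. Qed.

Lemma restricted_nonempty s : Gam' s !=set0.
Proof.
have [g G'g /(DeltaP Gam_incr)[gs _]] := restricted_Delta s.
by exists g.
Qed.

Lemma restricted_incr s : Gam' s `<` Gam' s.+1.
Proof.
split; first by move=> t [G't st]; split=> //; exact: (Gam_mono Gam_incr (ltnW (qs_incr s))).
have [g G'g /(DeltaP Gam_incr)[gs1 gs]] := restricted_Delta s.+1.
by move=> /(_ g (conj G'g gs1)) [_]; apply: gs.
Qed.

Lemma restricted_cover : \bigcup_s Gam' s = G'.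
Proof.
have qs_ge s : (s <= qs s)%N by elim: s => // s IH; apply: leq_ltn_trans IH (qs_incr s).
apply/seteqP; split=> [t [s _ []] //|t G't].
have [n _ nt] : (\bigcup_q Gam q) t by rewrite Gam_cover.
by exists n => //; split=> //; apply: (Gam_mono Gam_incr (qs_ge n)).
Qed.

(* The part of [r_q i_p x] off G' is annihilated on G' by [i_q], by self-determination. *)
Lemma restricted_compatible : compatible Gam' i'.
Proof.
move=> p q pq x sx; rewrite /i'; set Q := qs q; set y := i (qs p) x.
have sx' : supported (Gam (qs p)) x by apply: supported_sub sx => t [].
set z := restr (Gam Q) y; have sz : supported (Gam Q) z by apply: restr_supported.
have -> : restr (Gam' q) (restr G' y) = restr G' z.
  by rewrite restr_restr ?restrI // => t [].
rewrite {1}/y (i_compat (qs_mono pq) sx') -/y -/z {1}(restr_split G' z).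
rewrite (ext_opD (i_ext Q)); [|exact: supported_restr sz..].
apply: funext => t; case: (pselect (G' t)) => G't; last by rewrite !restr_out.
have sz' : supported (Gam Q) (restr (~` G') z) by apply: supported_restr.
rewrite !restr_in // (ext_vanish Gam_finite Gam_incr Gam_cover i_ext i_bounded i_compat
  G'_self_determined sz') ?addr0 // => k G'k; rewrite restr_out // => /(_ G'k).
Qed.

End RestrictedData.

Theorem proposition1p9 (R : realType) (T : Type) (Gam : nat -> set T)
  (i : nat -> (T -> R) -> (T -> R)) (G' : set T) (qs : nat -> nat) :
  BD_data [set: T] Gam i ->
  self_determined Gam i G' ->
  (forall s, (qs s < qs s.+1)%N) ->
  (forall q, (exists s, qs s = q) <-> (G' `&` Delta Gam q !=set0)) ->
  let Gam' := fun s => G' `&` Gam (qs s) in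
  let i' := fun s (x : T -> R) => restr G' (i (qs s) x) in
  BD_data G' Gam' i' /\
  (forall C : R, (forall q, op_norm_le (Gam q) (i q) C) ->
     forall s, op_norm_le (Gam' s) (i' s) C).
Proof.
move=> [Gam_fin_ne [Gam_incr [Gam_cover [i_ext [i_bounded i_compat]]]]].
move=> G'_sd qs_incr qs_range Gam' i'.
have Gam_finite q : finite_set (Gam q) by case: (Gam_fin_ne q).
have i'_norm C : (forall q, op_norm_le (Gam q) (i q) C) ->
    forall s, op_norm_le (Gam' s) (i' s) C.
  by move=> iC s; apply: op_norm_le_restr.
split=> //; split.
  by move=> s; split; [apply: finite_setIr | exact: (restricted_nonempty Gam_incr qs_range)].
split; first exact: (restricted_incr Gam_incr qs_incr qs_range).
split; first exact: (restricted_cover G' Gam_incr Gam_cover qs_incr).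
split.
  by move=> s; have := is_ext_op_restr (i_ext (qs s)) G'; rewrite setIT.
split; first by have [C iC] := i_bounded; exists C; apply: i'_norm.
exact: (restricted_compatible Gam_finite Gam_incr Gam_cover i_ext i_bounded i_compat G'_sd qs_incr).
Qed.
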